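(* Let $\lambda$ be a partition of $n$. Then $\mathcal{I}_\lambda=\mathcal{M}_\lambda+\mathcal{E}_\lambda+\mathcal{K}_\lambda$, where $\mathcal{M}_\lambda$ is the ideal generated by all square-free monomials of degree $n-\lambda_1+1$ in $x_1,\dots,x_n$; $\mathcal{E}_\lambda$ is the ideal generated by $e_1(x_1,\dots,x_n),\dots,e_{\ell(\lambda)-1}(x_1,\dots,x_n)$; $\mathcal{K}_\lambda$ is the ideal generated by the elements of the sets $e_r(m)$, where $n-1\ge m\ge n-\lambda_1+1$ and $r$ is an entry of the regular filling of $\lambda$ lying in the same column as the entry $m$ (namely column $n-m$, whose bottom cell contains $m$) and strictly above it.
   Context: $k$ is a field of characteristic $0$ and $R=k[x_1,\dots,x_n]$. For a set $S$ of variables, $e_r(S)$ is the $r$-th elementary symmetric polynomial in the variables of $S$ ($e_0=1$, and $e_r(S)=0$ if $r>|S|$). For $1\le m\le n$, $e_r(m)$ denotes the set $\{e_r(S): S\subseteq\{x_1,\dots,x_n\},\ |S|=m\}$. A partition $\lambda=(\lambda_1\ge\lambda_2\ge\cdots)$ of $n$ has length $\ell(\lambda)$ (number of nonzero parts) and conjugate $\lambda'$ with $\lambda'_i=\#\{j:\lambda_j\ge i\}$. The Young diagram of $\lambda$ is drawn with rows counted from the bottom: the bottom row has $\lambda_1$ cells, the next $\lambda_2$, etc., left-justified; columns are numbered $0,1,\dots,\lambda_1-1$ from left to right, and column $c$ has height $\lambda'_{c+1}$. For $1\le m\le n$ put $\delta_m(\lambda)=\lambda'_n+\cdots+\lambda'_{n-m+1}$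 (with $\lambda'_i=0$ for $i>\lambda_1$). The De Concini–Procesi ideal $\mathcal{I}_\lambda\subseteq R$ is the ideal generated by all elements of the sets $e_r(m)$ with $1\le m\le n$ and $m\ge r>m-\delta_m(\lambda)$. The regular filling of $\lambda$: for each column $c$, the bottom cell of column $c$ receives $n-c$, and the remaining $\lambda'_{c+1}-1$ cells of column $c$ receive, from top to bottom, the consecutive integers $1+\sum_{d<c}(\lambda'_{d+1}-1),\dots,\sum_{d\le c}(\lambda'_{d+1}-1)$. *)

From mathcomp Require Import all_boot all_order all_algebra.
From mathcomp Require Import mpoly.
Set Implicit Arguments. Unset Strict Implicit. Unset Printing Implicit Defensive.
Import GRing.Theory.
Local Open Scope ring_scope.

(* Partitions: a partition of n is a weakly decreasing list of positive
   parts summing to n; lambda_i (i >= 1) is nth 0 la i.-1. *)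
Definition is_partition (n : nat) (la : seq nat) : bool :=
  [&& sorted geq la, all (fun a => 0 < a)%N la & sumn la == n].

Definition part1 (la : seq nat) : nat := head 0%N la.

Definition plen (la : seq nat) : nat := size la.

Definition conj_part (la : seq nat) (i : nat) : nat := count (fun a => i <= a)%N la.

Definition delta (n : nat) (la : seq nat) (m : nat) : nat :=
  (\sum_(n - m + 1 <= i < n + 1) conj_part la i)%N.

(* regular filling: entry of the cell in column c (0-indexed, from the left)
   and row j (0-indexed, counted from the bottom).  The bottom cell (j = 0)
   gets n - c; the cells above receive, from top to bottom, the consecutive
   integers 1 + A, ..., A + (lambda'_{c+1} - 1), A = sum_{d<c} (lambda'_{d+1} - 1). *)
Definition reg_filling (n : nat) (la : seq nat) (c j : nat) : nat :=
  if j == 0%N then (n - c)%N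
  else ((\sum_(d < c) (conj_part la d.+1 - 1)) + (conj_part la c.+1 - j))%N.

Section Poly.
Variables (k : fieldType) (n : nat).

Definition esym (S : {set 'I_n}) (r : nat) : {mpoly k[n]} :=
  \sum_(T : {set 'I_n} | (T \subset S) && (#|T| == r)) \prod_(i in T) 'X_i.

Definition ideal_gen (G : {mpoly k[n]} -> Prop) (p : {mpoly k[n]}) : Prop :=
  exists l : seq ({mpoly k[n]} * {mpoly k[n]}),
    (forall q, q \in l -> G q.2) /\ p = \sum_(q <- l) q.1 * q.2.

Definition idealD (I J : {mpoly k[n]} -> Prop) (p : {mpoly k[n]}) : Prop :=
  exists a b, I a /\ J b /\ p = a + b.

Definition DP_gens (la : seq nat) (p : {mpoly k[n]}) : Prop :=
  exists (m r : nat) (S : {set 'I_n}),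
    [/\ (1 <= m <= n)%N, (m - delta n la m < r <= m)%N, #|S| = m & p = esym S r].
Definition DP_ideal (la : seq nat) := ideal_gen (DP_gens la).

Definition M_gens (la : seq nat) (p : {mpoly k[n]}) : Prop :=
  exists S : {set 'I_n}, #|S| = (n - part1 la + 1)%N /\ p = \prod_(i in S) 'X_i.
Definition M_ideal (la : seq nat) := ideal_gen (M_gens la).

Definition E_gens (la : seq nat) (p : {mpoly k[n]}) : Prop :=
  exists r : nat, (1 <= r < plen la)%N /\ p = esym [set: 'I_n] r.
Definition E_ideal (la : seq nat) := ideal_gen (E_gens la).

Definition K_gens (la : seq nat) (p : {mpoly k[n]}) : Prop :=
  exists (m j : nat) (S : {set 'I_n}),
    [/\ (n - part1 la + 1 <= m <= n - 1)%N,
        (1 <= j < conj_part la (n - m).+1)%N,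
        #|S| = m & p = esym S (reg_filling n la (n - m) j)].
Definition K_ideal (la : seq nat) := ideal_gen (K_gens la).

End Poly.

(* Every generator e_r(S) of I_lambda, with |S| = m and r > m - delta_m, lies in
   M + E + K, by induction on m.  If r >= n - lambda_1 + 1 it is a sum of
   square-free monomials of degree at least n - lambda_1 + 1.  If r also exceeds
   (m - 1) - delta_(m-1), the identity (m - r) e_r(S) = sum_(x in S) e_r(S - x)
   (char 0) reduces it to generators of I_lambda in m - 1 variables.  Otherwise
   r lies in the window (m - delta_m, (m - 1) - delta_(m-1)], and the window is
   exactly the set of entries of the regular filling strictly above the bottom
   cell of column n - m; for m < n this is a generator of K, for m = n the window
   is (0, ell(lambda) - 1] and r gives a generator of E.  Conversely the same
   window description shows that the generators of M, E and K are generators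
   of I_lambda. *)

From Pilot Require Import Defs.
From mathcomp Require Import all_boot all_order all_algebra.
From mathcomp Require Import mpoly zify.
Import GRing.Theory.
Local Open Scope ring_scope.
Set Implicit Arguments. Unset Strict Implicit.

Section Ideals.
Variables (k : fieldType) (n : nat).
Local Notation P := {mpoly k[n]}.

Definition is_ideal (I : P -> Prop) :=
  [/\ I 0, forall a b, I a -> I b -> I (a + b) & forall c a, I a -> I (c * a)].

Lemma ideal_gen_ideal (G : P -> Prop) : is_ideal (ideal_gen G).
Proof.
split.
- by exists [::]; rewrite big_nil.
- move=> _ _ [l1 [G1 ->]] [l2 [G2 ->]]; exists (l1 ++ l2); rewrite big_cat.
  by split=> // q; rewrite mem_cat => /orP[/G1|/G2].
- move=> c _ [l [Gl ->]]; exists [seq (c * q.1, q.2) | q <- l]; split.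
  + by move=> q /mapP[q' /Gl Gq' ->].
  + by rewrite big_map mulr_sumr; apply: eq_bigr => q _; rewrite mulrA.
Qed.

Lemma ideal_gen_sub (G : P -> Prop) p : G p -> ideal_gen G p.
Proof.
move=> Gp; exists [:: (1, p)]; rewrite big_seq1 mul1r.
by split=> // q; rewrite inE => /eqP ->.
Qed.

Lemma ideal_gen_min (G I : P -> Prop) : is_ideal I -> (forall p, G p -> I p) ->
  forall p, ideal_gen G p -> I p.
Proof.
move=> [I0 ID IM] GI _ [l [Gl ->]]; elim: l Gl => [|q l IHl] Gl.
  by rewrite big_nil.
rewrite big_cons; apply: ID; first by apply/IM/GI/Gl; rewrite mem_head.
by apply: IHl => q' lq'; apply: Gl; rewrite inE lq' orbT.
Qed.

Lemma ideal_sum (I : P -> Prop) (T : Type) (r : seq T) (Q : pred T) F :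
  is_ideal I -> (forall i, Q i -> I (F i)) -> I (\sum_(i <- r | Q i) F i).
Proof. by move=> [I0 ID _]; apply: big_ind. Qed.

Lemma idealD_ideal (I J : P -> Prop) : is_ideal I -> is_ideal J -> is_ideal (idealD I J).
Proof.
move=> [I0 ID IM] [J0 JD JM]; split.
- by exists 0, 0; rewrite addr0.
- move=> _ _ [a1 [b1 [Ia1 [Jb1 ->]]]] [a2 [b2 [Ia2 [Jb2 ->]]]].
  by exists (a1 + a2), (b1 + b2); rewrite addrACA; split; [apply: ID|split; [apply: JD|]].
- move=> c _ [a [b [Ia [Jb ->]]]]; exists (c * a), (c * b).
  by rewrite mulrDr; split; [apply: IM|split; [apply: JM|]].
Qed.

Lemma idealDl (I J : P -> Prop) p : is_ideal J -> I p -> idealD I J p.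
Proof. by move=> [J0 _ _] Ip; exists p, 0; rewrite addr0. Qed.

Lemma idealDr (I J : P -> Prop) p : is_ideal I -> J p -> idealD I J p.
Proof. by move=> [I0 _ _] Jp; exists 0, p; rewrite add0r. Qed.

Lemma idealD_min (I J L : P -> Prop) : is_ideal L -> (forall p, I p -> L p) ->
  (forall p, J p -> L p) -> forall p, idealD I J p -> L p.
Proof. by move=> [_ LD _] IL JL _ [a [b [Ia [Jb ->]]]]; apply: LD; [apply: IL|apply: JL]. Qed.

End Ideals.

Section ElementarySymmetric.
Variables (k : fieldType) (n : nat).
Local Notation esym := (Defs.esym k).

Lemma esym_eq0 (S : {set 'I_n}) r : (#|S| < r)%N -> esym S r = 0.
Proof.
move=> ltSr; rewrite /Defs.esym big_pred0 // => T.
apply/negbTE/andP => -[/subset_leq_card leTS /eqP cardT]; lia.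
Qed.

Lemma esym_card (S : {set 'I_n}) : esym S #|S| = \prod_(i in S) 'X_i.
Proof.
rewrite /Defs.esym (big_pred1 S) // => T /=; rewrite eqEcard.
by case: (boolP (T \subset S)) => //= /subset_leq_card leTS; rewrite eqn_leq leTS.
Qed.

(* Each r-subset T of S is obtained as an r-subset of S - x for exactly
   |S| - r choices of x, namely x in S - T. *)
Lemma esym_sum_setD1 (S : {set 'I_n}) r :
  (#|S| - r)%:R * esym S r = \sum_(x in S) esym (S :\ x) r.
Proof.
rewrite /Defs.esym mulr_sumr.
rewrite (exchange_big_dep (fun T : {set 'I_n} => (T \subset S) && (#|T| == r))); last first.
  by move=> x T _; rewrite subsetD1 => /andP[/andP[-> _] ->].
apply: eq_bigr => T /andP[TS /eqP cardT].
rewrite [RHS](eq_bigl (fun x => x \in S :\: T)); last first.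
  by move=> x; rewrite subsetD1 TS cardT eqxx in_setD andbC /= andbT.
by rewrite sumr_const cardsDS // cardT mulr_natl.
Qed.

Lemma esym_setD1_rec (S : {set 'I_n}) r : [pchar k] =i pred0 -> (r < #|S|)%N ->
  esym S r = ((#|S| - r)%:R^-1 : k)%:MP * \sum_(x in S) esym (S :\ x) r.
Proof.
move=> /pcharf0P char0 ltrS; have nz : (#|S| - r)%:R != 0 :> k by rewrite char0; lia.
by rewrite -esym_sum_setD1 mul_mpolyC mulr_natl -scaler_nat scalerA mulVf // scale1r.
Qed.

End ElementarySymmetric.

Lemma sum_nat_leq (a N : nat) : (\sum_(1 <= i < N.+1) (i <= a : nat) = minn a N)%N.
Proof.
elim: N => [|N IHN]; first by rewrite big_geq //; lia.
by rewrite big_nat_recr //= IHN; case: leqP; lia.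
Qed.

Lemma sum_conj_part (la : seq nat) N : (forall a, a \in la -> a <= N)%N ->
  (\sum_(1 <= i < N.+1) conj_part la i = sumn la)%N.
Proof.
elim: la => [|a l IHl] leN; first by rewrite big1.
rewrite /conj_part /= big_split /= -/(conj_part l) sum_nat_leq.
rewrite IHl => [|b lb]; last by apply: leN; rewrite inE lb orbT.
by have := leN a (mem_head _ _); lia.
Qed.

Section Partition.
Variables (n : nat) (la : seq nat).
Hypothesis la_part : is_partition n la.

Lemma part_le_part1 a : a \in la -> (a <= part1 la)%N.
Proof.
case/and3P: la_part => + _ _; case: la => [|x s] //= sorted_la.
rewrite inE => /orP[/eqP -> //|sa].
have geq_trans : transitive geq := fun y x z le_yx le_zy => leq_trans le_zy le_yx.
by have /allP := order_path_min geq_trans sorted_la; apply.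
Qed.

Lemma part_le_n a : a \in la -> (a <= n)%N.
Proof.
case/and3P: la_part => _ _ /eqP <-; elim: la => [|x s IHs] //=.
by rewrite inE => /orP[/eqP ->|/IHs]; lia.
Qed.

Lemma part1_le_n : (part1 la <= n)%N.
Proof. by case E: la => [|x s] //; apply: part_le_n; rewrite E mem_head. Qed.

Lemma plen_le_n : (plen la <= n)%N.
Proof.
case/and3P: la_part => _ + /eqP <-; rewrite /plen.
by elim: la => [|x s IHs] //= /andP[x_gt0 /IHs]; lia.
Qed.

Lemma conj_part1 : conj_part la 1 = plen la.
Proof. by case/and3P: la_part => _ la_pos _; apply/eqP; rewrite -all_count. Qed.

Lemma conj_part_gt0 i : (0 < i <= part1 la)%N -> (0 < conj_part la i)%N.
Proof. by case: la => [|x s] /=; [lia|rewrite /conj_part /= => /andP[_ ->]]. Qed.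

Lemma conj_part_eq0 i : (part1 la < i)%N -> conj_part la i = 0%N.
Proof.
move=> lt1i; apply/eqP; rewrite /conj_part -leqn0 leqNgt -has_count.
by apply/hasP => -[a /part_le_part1]; lia.
Qed.

Lemma delta_recr m : (0 < m <= n)%N ->
  delta n la m = (conj_part la (n - m).+1 + delta n la m.-1)%N.
Proof.
move=> m_in; rewrite /delta big_ltn; last by lia.
by congr (_ + _)%N; [congr conj_part|congr (\sum_(_ <= i < _) _)%N]; lia.
Qed.

Lemma delta_eq0 m : (m <= n - part1 la)%N -> delta n la m = 0%N.
Proof.
move=> le_m; rewrite /delta big_nat_cond big1 // => i /andP[/andP[le_i _] _].
by apply: conj_part_eq0; have := part1_le_n; lia.
Qed.

Lemma sum_conj_part_delta c : (c <= n)%N ->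
  (\sum_(d < c) conj_part la d.+1 + delta n la (n - c) = n)%N.
Proof.
move=> le_cn; have [_ _ /eqP sum_la] := and3P la_part.
rewrite /delta subKn // !addn1 -[in RHS]sum_la -(sum_conj_part part_le_n).
rewrite (@big_cat_nat _ _ _ c.+1 1 n.+1) //=.
by congr (_ + _)%N; rewrite big_add1 big_mkord.
Qed.

Lemma delta_n : delta n la n = n.
Proof. by have := sum_conj_part_delta (leq0n n); rewrite big_ord0 subn0. Qed.

Definition filling_offset (c : nat) : nat := \sum_(d < c) (conj_part la d.+1 - 1).

Lemma reg_filling_above j c : j != 0%N ->
  reg_filling n la c j = (filling_offset c + (conj_part la c.+1 - j))%N.
Proof. by rewrite /reg_filling => /negPf ->. Qed.

(* Columns 0, ..., n - m - 1 all exist, so dropping their bottom cells removes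
   exactly n - m cells; hence m - delta_m is the offset of column n - m. *)
Lemma filling_offset_delta m : (n - part1 la <= m <= n)%N ->
  (filling_offset (n - m) + delta n la m = m)%N.
Proof.
move=> m_in; have := sum_conj_part_delta (leq_subr m n).
have -> : (\sum_(d < n - m) conj_part la d.+1
           = \sum_(d < n - m) (conj_part la d.+1 - 1) + (n - m))%N.
  rewrite -[X in (_ + X)%N]card_ord -sum1_card -big_split /=.
  by apply: eq_bigr => d _; rewrite subnK // conj_part_gt0 //; have := ltn_ord d; lia.
by rewrite subKn ?/filling_offset; lia.
Qed.

Lemma window_reg_filling m r : (n - part1 la < m <= n)%N ->
  (m - delta n la m < r <= m.-1 - delta n la m.-1)%N <->
  exists2 j, (0 < j < conj_part la (n - m).+1)%N & r = reg_filling n la (n - m) j.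
Proof.
move=> m_in; have offset_m := filling_offset_delta (m := m) ltac:(lia).
have delta_m := delta_recr (m := m) ltac:(lia); split.
- move=> r_in; exists (conj_part la (n - m).+1 - (r - filling_offset (n - m)))%N.
    by lia.
  by rewrite reg_filling_above; lia.
- by move=> [j j_in ->]; rewrite reg_filling_above; lia.
Qed.

End Partition.

Section Main.
Variables (k : fieldType) (n : nat) (la : seq nat).
Hypothesis char0 : [pchar k] =i pred0.
Hypothesis la_part : is_partition n la.
Local Notation esym := (Defs.esym k).
Local Notation P := {mpoly k[n]}.

Definition MEK_ideal : P -> Prop :=
  idealD (idealD (M_ideal la) (E_ideal la)) (K_ideal la).

Lemma MEK_ideal_ideal : is_ideal MEK_ideal.
Proof. by do ![apply: idealD_ideal | apply: ideal_gen_ideal]. Qed.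

Lemma M_MEK p : M_ideal la p -> MEK_ideal p.
Proof.
by move=> Mp; apply: idealDl; [|apply: idealDl => //]; apply: ideal_gen_ideal.
Qed.

Lemma E_MEK p : E_ideal la p -> MEK_ideal p.
Proof.
by move=> Ep; apply: idealDl; [|apply: idealDr => //]; apply: ideal_gen_ideal.
Qed.

Lemma K_MEK p : K_ideal la p -> MEK_ideal p.
Proof. by move=> Kp; apply: idealDr => //; apply: idealD_ideal; apply: ideal_gen_ideal. Qed.

Lemma card_le_n (S : {set 'I_n}) : (#|S| <= n)%N.
Proof. by rewrite -[X in (_ <= X)%N]card_ord -cardsT subset_leq_card ?subsetT. Qed.

Lemma prod_X_M (T : {set 'I_n}) : (n - part1 la + 1 <= #|T|)%N ->
  M_ideal la (\prod_(i in T) 'X_i : P).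
Proof.
move=> /card_geqP[s [uniq_s size_s sT]].
have UT : [set x in s] \subset T by apply/subsetP => x; rewrite inE => /sT.
rewrite (big_setID [set x in s]) /= (setIidPr UT) mulrC.
have [_ _ M_mul] := ideal_gen_ideal (@M_gens k n la); apply: M_mul.
apply: ideal_gen_sub; exists [set x in s]; split => //.
by rewrite cardsE (card_uniqP uniq_s).
Qed.

Lemma esym_M (S : {set 'I_n}) r : (n - part1 la + 1 <= r)%N -> M_ideal la (esym S r).
Proof.
move=> le_r; apply: ideal_sum; first exact: ideal_gen_ideal.
by move=> T /andP[_ /eqP cardT]; apply: prod_X_M; rewrite cardT.
Qed.

Lemma esym_window_MEK (S : {set 'I_n}) r :
  (#|S| - delta n la #|S| < r <= #|S|.-1 - delta n la #|S|.-1)%N ->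
  MEK_ideal (esym S r).
Proof.
set m := #|S|; move=> r_in; have le_mn : (m <= n)%N := card_le_n S.
have lt_m : (n - part1 la < m)%N.
  rewrite ltnNge; apply/negP => le_m; move: r_in.
  by rewrite !delta_eq0 //; lia.
case: (ltnP m n) => [lt_mn|le_nm].
  have [j j_in ->] := (window_reg_filling la_part r (m := m) ltac:(lia)).1 r_in.
  apply/K_MEK/ideal_gen_sub; exists m, j, S; split => //; lia.
have m_n : m = n by lia.
have := delta_recr la_part (m := n) ltac:(lia).
rewrite subnn (conj_part1 la_part) (delta_n la_part) => delta_pred.
apply/E_MEK/ideal_gen_sub; exists r; split.
  by move: r_in; rewrite m_n (delta_n la_part); lia.
by have -> : S = setT by apply/eqP; rewrite eqEcard subsetT cardsT /= card_ord -/m m_n.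
Qed.

Lemma DP_gens_MEK m (S : {set 'I_n}) r : #|S| = m ->
  (m - delta n la m < r)%N -> MEK_ideal (esym S r).
Proof.
have [MEK0 _ MEKM] := MEK_ideal_ideal.
elim: m S r => [|m IHm] S r cardS lt_r; first by rewrite esym_eq0 // cardS; lia.
case: (leqP r m.+1) => [le_r|]; last by move=> lt_mr; rewrite esym_eq0 ?cardS.
case: (leqP (n - part1 la + 1) r) => [le1_r|lt_r1]; first exact/M_MEK/esym_M.
case: (ltnP (m - delta n la m) r) => [lt_rec|le_rec]; last first.
  by apply: esym_window_MEK; rewrite cardS /=; lia.
have lt_m : (n - part1 la < m.+1)%N.
  rewrite ltnNge; apply/negP => /(delta_eq0 la_part) delta0.
  by move: lt_r; rewrite delta0; lia.
rewrite esym_setD1_rec // cardS; last by lia.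
apply/MEKM/(ideal_sum _ MEK_ideal_ideal) => x xS.
by apply: IHm => //; have := cardsD1 x S; rewrite xS cardS; lia.
Qed.

Lemma DP_MEK p : DP_ideal la p -> MEK_ideal p.
Proof.
apply: ideal_gen_min; first exact: MEK_ideal_ideal.
by move=> _ [m [r [S [_ /andP[lt_r _] cardS ->]]]]; apply: DP_gens_MEK lt_r.
Qed.

Lemma MEK_DP p : MEK_ideal p -> DP_ideal la p.
Proof.
have DP_ideal_ideal := ideal_gen_ideal (@DP_gens k n la).
have le1n := part1_le_n la_part.
move: p; apply: (idealD_min DP_ideal_ideal); first apply: (idealD_min DP_ideal_ideal);
  apply: (ideal_gen_min DP_ideal_ideal) => q.
- move=> [S [cardS ->]]; apply: ideal_gen_sub; exists #|S|, #|S|, S.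
  have le_Sn := card_le_n S.
  have delta_S := delta_recr la_part (m := #|S|) ltac:(lia).
  have conj_gt0 := conj_part_gt0 la_part (i := (n - #|S|).+1) ltac:(lia).
  by rewrite esym_card; split => //; lia.
- move=> [r [r_in ->]]; apply: ideal_gen_sub; exists n, r, setT.
  have := plen_le_n la_part; rewrite cardsT card_ord (delta_n la_part).
  by split => //; lia.
- move=> [m [j [S [m_in j_in cardS ->]]]]; apply: ideal_gen_sub; exists m.
  have lt_m : (n - part1 la < m <= n)%N by lia.
  have := (window_reg_filling la_part _ lt_m).2 (ex_intro2 _ _ j j_in erefl).
  by move=> r_in; exists (reg_filling n la (n - m) j), S; split => //; lia.
Qed.

End Main.

Theorem mainTheorem4 (k : fieldType) (n : nat) (la : seq nat) :
  [pchar k] =i pred0 ->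
  is_partition n la ->
  forall p : {mpoly k[n]},
    DP_ideal la p <->
    idealD (idealD (M_ideal la) (E_ideal la)) (K_ideal la) p.
Proof. by move=> char0 la_part p; split; [exact: DP_MEK|exact: MEK_DP]. Qed.
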